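(* Almost surely, the function $\mathcal D:\mathbb R\to\mathbb R$ is continuous and non-decreasing.
   Context: Last passage percolation (LPP): for a sequence $f=(f_1,f_2,\dots)$ of continuous functions $\mathbb R\to\mathbb R$ (thought of as placed on horizontal lines indexed $1,2,\dots$ from top to bottom), $y\le x$ and $n\ge m$, an up-right path $\gamma$ from $(y,n)$ to $(x,m)$ is specified by jump times $y=t_{n+1}\le t_n\le\dots\le t_{m+1}\le t_m=x$ (the path is on line $i$ during $[t_{i+1},t_i]$ and jumps from line $i$ to line $i-1$ at time $t_i$); its weight is $f[\gamma]=\sum_{i=m}^n\big(f_i(t_i)-f_i(t_{i+1})\big)$, and $f[(y,n)\to(x,m)]=\sup_\gamma f[\gamma]$ over all such paths; a maximizing path is a geodesic. The parabolic Airy line ensemble $\mathcal P=(\mathcal P_1,\mathcal P_2,\dots)$ is the random $\mathbb N$-indexed collection of continuous non-intersecting curves $\mathcal P_1>\mathcal P_2>\cdots$ on $\mathbb R$ such that, for all $m\in\mathbb N$ and $t_1<\dots<t_m$, the point process $\{(\mathcal P_i(t_j)+t_j^2,t_j): i\in\mathbb N, j\le m\}$ is determinantal with the extended Airy kernel $K((x,t);(y,s))=\int_0^\infty e^{-u(t-s)}\mathrm{Ai}(x+u)\mathrm{Ai}(y+u)\,du$ for $t\ge s$ and $-\int_{-\infty}^0 e^{-u(t-s)}\mathrm{Ai}(x+u)\mathrm{Ai}(y+u)\,du$ for $t<s$. The parabolic Airy sheet $\mathcal S:\mathbb R^2\to\mathbb R$ is the continuous random process (unique in law) such that (i) $\mathcal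 S(\cdot+z,\cdot+z)\overset{d}{=}\mathcal S(\cdot,\cdot)$ for every $z\in\mathbb R$, and (ii) $\mathcal S$ can be coupled with $\mathcal P$ so that $\mathcal S(0,\cdot)=\mathcal P_1(\cdot)$ and, almost surely, for all rational $x,y,z$ with $y>0$ there is a random $K$ such that for all $k\ge K$, $\mathcal S(y,z)-\mathcal S(y,x)=\mathcal P[(y)_k\to(z,1)]-\mathcal P[(y)_k\to(x,1)]$, where $(y)_k=(-(k/(2y))^{1/2},k)$. Fix $y_a<y_b$ and define the weight difference profile $\mathcal D(x)=\mathcal S(y_b,x)-\mathcal S(y_a,x)$. *)

From HB Require Import structures.
From mathcomp Require Import all_boot all_order all_algebra.
From mathcomp Require Import all_classical all_reals all_analysis.

Set Implicit Arguments.
Unset Strict Implicit.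
Unset Printing Implicit Defensive.

Import Order.TTheory GRing.Theory Num.Theory.
Import numFieldNormedType.Exports.

Local Open Scope classical_set_scope.
Local Open Scope ring_scope.

Section AiryDefs.
Variable R : realType.

Local Notation leb := (@lebesgue_measure R).

Definition airy_partial (x b : R) : R :=
  \int[leb]_(t in `[0, b]) cos (t ^+ 3 / 3 + x * t).

Definition Ai (x : R) : R := pi^-1 * lim (airy_partial x @ +oo).

Definition airy_kernel (x t y s : R) : R :=
  if s <= t then
    \int[leb]_(u in `[0, +oo[) (expR (- (u * (t - s))) * Ai (x + u) * Ai (y + u))
  else
    - \int[leb]_(u in `]-oo, 0]) (expR (- (u * (t - s))) * Ai (x + u) * Ai (y + u)).

Fixpoint iter_integral (Bs : seq (set R)) (f : seq R -> R) : R :=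
  match Bs with
  | [::] => f [::]
  | B :: Bs' => \int[leb]_(x in B) iter_integral Bs' (fun xs => f (x :: xs))
  end.

(* number of points (L_i(s) + s^2, s), i >= 1, lying in B x {s} *)
Definition level_count (L : nat -> R -> R) (B : set R) (s : R) : \bar R :=
  (\sum_(1 <= i <oo) (\1_B (L i s + s ^+ 2))%:E)%E.

(* Parabolic Airy line ensemble; curves are L 1, L 2, ... (index 0 unused).
   Determinantal structure stated through the factorial moments /
   correlation functions w.r.t. Lebesgue x counting measure:
   for pairwise disjoint bounded Borel sets B_k x {s_k},
   E[prod_k N(B_k x {s_k})] = int_{B_1 x..x B_n} det[K((x_a,s_a);(x_b,s_b))] dx. *)
Definition is_parabolic_Airy_line_ensemble (d : measure_display)
    (Omega : measurableType d) (Pr : probability Omega R)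
    (L : Omega -> nat -> R -> R) : Prop :=
  (forall i t, measurable_fun setT (fun w => L w i t)) /\
  (forall w i, continuous (L w i)) /\
  (forall w i t, (1 <= i)%N -> L w i.+1 t < L w i t) /\
  (forall (n : nat) (s : 'I_n -> R) (B : 'I_n -> set R),
     (forall k, measurable (B k)) ->
     (forall k, exists M : R, forall x, B k x -> `|x| <= M) ->
     (forall k l, k != l -> s k != s l \/ B k `&` B l = set0) ->
     (\int[Pr]_w (\big[*%E/1%E]_(k < n) level_count (L w) (B k) (s k)))%E =
     (iter_integral [seq B k | k <- enum 'I_n]
        (fun xs => \det (\matrix_(a < n, b < n)
                          airy_kernel (nth 0 xs a) (s a) (nth 0 xs b) (s b))))%:E).

Definition lpp (f : nat -> R -> R) (y : R) (n : nat) (x : R) (m : nat) : R :=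
  sup [set v : R | exists t : nat -> R,
         [/\ t n.+1 = y, t m = x,
             (forall i, (m <= i <= n)%N -> t i.+1 <= t i) &
             v = \sum_(m <= i < n.+1) (f i (t i) - f i (t i.+1))]].

(* the point (y)_k = (-(k/(2y))^{1/2}, k), first coordinate *)
Definition start_time (y : R) (k : nat) : R := - Num.sqrt (k%:R / (2 * y)).

Definition is_parabolic_Airy_sheet (d : measure_display)
    (Omega : measurableType d) (Pr : probability Omega R)
    (S : Omega -> R -> R -> R) : Prop :=
  (forall x y, measurable_fun setT (fun w => S w x y)) /\
  (forall w, continuous (fun p : R * R => S w p.1 p.2)) /\
  (* (i): S(.+z,.+z) has the same law (finite-dimensional distributions) as S *)
  (forall (z : R) (pts : seq (R * R * R)),
     Pr [set w | forall p, p \in pts -> S w (p.1.1 + z) (p.1.2 + z) <= p.2] =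
     Pr [set w | forall p, p \in pts -> S w p.1.1 p.1.2 <= p.2]) /\
  (exists L : Omega -> nat -> R -> R,
     [/\ is_parabolic_Airy_line_ensemble Pr L,
         (\forall w \ae Pr, forall x, S w 0 x = L w 1%N x) &
         (\forall w \ae Pr, forall x y z : rat, 0 < y ->
            exists K : nat, forall k : nat, (K <= k)%N ->
              S w (ratr y) (ratr z) - S w (ratr y) (ratr x) =
              lpp (L w) (start_time (ratr y) k) k (ratr z) 1
              - lpp (L w) (start_time (ratr y) k) k (ratr x) 1)]).

End AiryDefs.

From HB Require Import structures.
From mathcomp Require Import all_boot all_order all_algebra.
From mathcomp Require Import all_classical all_reals all_analysis.
From mathcomp Require Import ring lra zify.
Import Order.TTheory GRing.Theory Num.Theory.
Import numFieldNormedType.Exports.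
Local Open Scope classical_set_scope.
Local Open Scope ring_scope.

(* For 0 < a <= b and x <= z, the coupling with the Airy line ensemble
   expresses both S(a, z) - S(a, x) and S(b, z) - S(b, x), for k large, as
   differences of last passage values from (a)_k and (b)_k, which start
   further left than x.  Last passage values satisfy the quadrangle
   inequality (geodesics A -> z and B -> x cross, and exchanging their tails
   gives paths A -> x and B -> z), so pathwise
       S(a, z) - S(a, x) <= S(b, z) - S(b, x)
   at rational points, and by continuity of S at all real points.  To reach
   arbitrary times ya < yb we use shift invariance: the four-point
   inequality holds a.s. for S(. + z0, . + z0) with ya + z0 > 0, and an
   a.s. inequality between four values only depends on their joint
   distribution functions.  Intersecting over rational x <= z and using
   continuity yields that D = S(yb, .) - S(ya, .) is a.s. nondecreasing. *)

Section LastPassage.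
Variables (R : realType) (f : nat -> R -> R).
Hypothesis f_cont : forall i, continuous (f i).
Implicit Types (s t : nat -> R) (x y : R) (m n j : nat).

(* [t] encodes an up-right path from (y, n) to (x, m): it jumps from line i
   to line i-1 at time t i, and the jump times are non-increasing in i. *)
Definition up_right_path t y n x m : Prop :=
  [/\ t n.+1 = y, t m = x & forall i, (m <= i <= n)%N -> t i.+1 <= t i].

Definition path_weight t m n : R := \sum_(m <= i < n.+1) (f i (t i) - f i (t i.+1)).

Lemma up_right_path_between t y n x m : up_right_path t y n x m ->
  forall i, (m <= i <= n.+1)%N -> y <= t i <= x.
Proof.
move=> [<- <- mono].
have down d i : (m <= i)%N -> (i + d <= n.+1)%N -> t (i + d)%N <= t i.
  elim: d => [|d IH] in i *; first by rewrite addn0.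
  move=> mi id; apply: le_trans (IH i mi _); last by lia.
  by rewrite addnS; apply: mono; lia.
move=> i /andP[mi iN]; apply/andP; split.
  by have := down (n.+1 - i)%N i mi; rewrite (subnKC iN); apply.
by have := down (i - m)%N m (leqnn _); rewrite (subnKC mi); apply; lia.
Qed.

(* By continuity of the lines, path weights between fixed endpoints are
   bounded, so each path weight is at most the last passage value. *)
Lemma path_weight_le_lpp t y n x m : y <= x ->
  up_right_path t y n x m -> path_weight t m n <= lpp f y n x m.
Proof.
move=> yx path.
have /choice [M bound] : forall i, exists M, forall u, y <= u <= x -> `|f i u| <= M.
  move=> i; have [c _ max] := @EVT_max R (fun u => `|f i u|) y x yx
    (continuous_subspaceT (fun u => continuous_comp (f_cont i u) (@norm_continuous _ R _))).
  by exists `|f i c| => u hu; apply: max; rewrite in_itv.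
apply: ub_le_sup; last by exists t; case: path.
exists (\sum_(m <= i < n.+1) (M i + M i)) => _ [s [sy sx smono ->]].
apply: ler_sum_nat => i mi.
have between := @up_right_path_between s y n x m (And3 sy sx smono).
apply: le_trans (ler_norm _) _; apply: le_trans (ler_normB _ _) _.
by apply: lerD; apply: bound; apply: between; lia.
Qed.

(* Conversely, a common upper bound of all path weights bounds the last
   passage value (the path jumping at time x on every line but n shows that
   paths exist). *)
Lemma lpp_le_ub y n x m (C : R) : (m <= n)%N -> y <= x ->
  (forall t, up_right_path t y n x m -> path_weight t m n <= C) ->
  lpp f y n x m <= C.
Proof.
move=> mn yx ub; apply: ge_sup => [|_ [t [ty tx tmono ->]]]; last by apply: ub.
pose t i := if i == n.+1 then y else x.
exists (path_weight t m n), t; split => //; first by rewrite /t eqxx.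
- by rewrite /t; case: eqP => // mN; exfalso; lia.
- move=> i mi; rewrite /t eqSS.
  have -> : (i == n.+1) = false by apply/eqP; lia.
  by case: eqP.
Qed.

(* Discrete intermediate value theorem: if the path t starts (at line k+1)
   weakly left of s and ends (at line m) weakly right of s, then the two
   paths cross between consecutive lines j+1 and j for some m <= j <= k. *)
Lemma paths_cross s t m k : (m <= k)%N ->
  t k.+1 <= s k.+1 -> s m <= t m ->
  exists j, [/\ (m <= j <= k)%N, s j <= t j & t j.+1 <= s j.+1].
Proof.
move=> mk top bottom.
suff from d i : (i + d)%N = k -> (m <= i)%N -> s i <= t i ->
    exists j, [/\ (i <= j <= k)%N, s j <= t j & t j.+1 <= s j.+1].
  have [j [ij ? ?]] := from (k - m)%N m ltac:(lia) (leqnn _) bottom.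
  by exists j; split => //; lia.
elim: d => [|d IH] in i *; move=> idk mi sti.
  by exists i; split => //; [lia | rewrite addn0 in idk; rewrite idk].
have [le|lt] := leP (t i.+1) (s i.+1); first by exists i; split => //; lia.
have [j [ij ? ?]] := IH i.+1 ltac:(lia) ltac:(lia) (ltW lt).
by exists j; split => //; lia.
Qed.

Definition splice s t j : nat -> R := fun i => if (i <= j)%N then s i else t i.

Lemma splice_up_right {s t} j {ys yt xs xt n m} : (m <= j <= n)%N ->
  t j.+1 <= s j -> up_right_path s ys n xs m -> up_right_path t yt n xt m ->
  up_right_path (splice s t j) yt n xs m.
Proof.
move=> /andP[mj jn] cross [_ sx smono] [ty _ tmono]; rewrite /splice.
split; first by case: leqP => // ?; exfalso; lia.
  by case: leqP => // ?; exfalso; lia.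
move=> i mi; case: leqP => ?; case: leqP => ?; try (exfalso; lia).
- by have -> : i = j by lia.
- by apply: tmono; lia.
- by apply: smono; lia.
Qed.

Lemma splice_weight s t j m n :
  path_weight s m n + path_weight t m n =
  path_weight (splice s t j) m n + path_weight (splice t s j) m n.
Proof.
rewrite /path_weight -!big_split; apply: eq_big_nat => i _ /=; rewrite /splice.
by case: leqP => ?; case: leqP => ?; first [ring | lia].
Qed.

(* Quadrangle inequality for last passage values: for A <= B <= x <= z any
   paths A -> z and B -> x cross, and exchanging their parts after the
   crossing yields paths A -> x and B -> z of the same total weight. *)
Lemma lpp_quadrangle (A B x z : R) m k : (m <= k)%N ->
  A <= B -> B <= x -> x <= z ->
  lpp f A k z m + lpp f B k x m <= lpp f A k x m + lpp f B k z m.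
Proof.
move=> mk AB Bx xz.
have Ax : A <= x by apply: le_trans Bx.
have Bz : B <= z by apply: le_trans xz.
have Az : A <= z by apply: le_trans xz.
set C := lpp f A k x m + lpp f B k z m.
have swap t s : up_right_path t A k z m -> up_right_path s B k x m ->
    path_weight t m k + path_weight s m k <= C.
  move=> tpath spath; have [tA tz _] := tpath; have [sB sx smono] := spath.
  have [j [jr sjtj tjsj]] := @paths_cross s t m k mk
    ltac:(by rewrite tA sB) ltac:(by rewrite sx tz).
  rewrite addrC (splice_weight s t j); apply: lerD; apply: path_weight_le_lpp => //.
    apply: (splice_up_right j jr _ spath tpath).
    by apply: le_trans tjsj (smono j _); lia.
  apply: (splice_up_right j jr _ tpath spath).
  by apply: le_trans (smono j _) sjtj; lia.
rewrite -lerBrDr; apply: lpp_le_ub => // t tpath.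
rewrite lerBrDr addrC -lerBrDr; apply: lpp_le_ub => // s spath.
by rewrite lerBrDr addrC; apply: swap.
Qed.
End LastPassage.

Section ContinuityAndRationals.
Variable R : realType.

Lemma ge0_from_right_rationals (h : R -> R) (x y : R) : x < y ->
  {for x, continuous h} -> (forall q : rat, x < ratr q < y -> 0 <= h (ratr q)) ->
  0 <= h x.
Proof.
move=> xy hx hq; rewrite leNgt; apply/negP => hx0.
have /cvgrPdist_lt /(_ (- h x)) := hx.
move=> /(_ ltac:(lra)) /nbhs_ballP [e /= e0 close].
have [q] : exists q : rat, ratr q \in `]x, Num.min (x + e) y[.
  by apply: rat_in_itvoo; rewrite lt_min xy ltrDl e0.
rewrite in_itv /= lt_min => /andP[xq /andP[qe qy]].
have /close : ball x e (ratr q).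
  by rewrite -ball_normE /= ltr_norml; apply/andP; split; lra.
have := hq q ltac:(by rewrite xq qy).
rewrite /= ltr_norml => ? /andP[? ?]; lra.
Qed.

Lemma homo_from_rationals (D : R -> R) (c : R) : continuous D ->
  (forall qx qz : rat, c < ratr qx -> qx <= qz -> D (ratr qx) <= D (ratr qz)) ->
  {in `]c, +oo[ &, {homo D : x z / x <= z}}.
Proof.
move=> Dcont Drat x z; rewrite !in_itv /= !andbT => cx _ xz.
have from_rational (qx : rat) (z' : R) : c < ratr qx -> ratr qx <= z' ->
    D (ratr qx) <= D z'.
  move=> cq qz; rewrite -subr_ge0.
  apply: (@ge0_from_right_rationals (fun t => D t - D (ratr qx)) z' (z' + 1)) => [||q qrange].
  - lra.
  - exact: cvgB (Dcont z') (cvg_cst _).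
  - by rewrite subr_ge0; apply: Drat; rewrite // -(ler_rat R); lra.
have [<-|neq] := eqVneq x z; first by [].
rewrite -subr_ge0; apply: (@ge0_from_right_rationals (fun t => D z - D t) x z) => [||q qrange].
- by rewrite lt_neqAle neq.
- exact: cvgB (cvg_cst _) (Dcont x).
- by rewrite subr_ge0; apply: from_rational; lra.
Qed.

Lemma homo_from_all_rationals (D : R -> R) : continuous D ->
  (forall qx qz : rat, qx <= qz -> D (ratr qx) <= D (ratr qz)) ->
  {homo D : x z / x <= z}.
Proof.
move=> Dcont Drat x z xz.
apply: (@homo_from_rationals D (x - 1)) => // [qx qz _||]; first exact: Drat.
all: by rewrite in_itv /= andbT; lra.
Qed.

Lemma continuous_slice_r (F : R -> R -> R) (a : R) :
  continuous (fun p : R * R => F p.1 p.2) -> continuous (F a).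
Proof.
move=> Fcont x.
have pair_cvg : (fun x' : R => (a, x')) @ x --> (a, x).
  exact: (cvg_pair (cvg_cst a) cvg_id).
exact: (continuous_comp pair_cvg (Fcont (a, x))).
Qed.

Lemma continuous_slice_l (F : R -> R -> R) (x : R) :
  continuous (fun p : R * R => F p.1 p.2) -> continuous (F^~ x).
Proof.
move=> Fcont a.
have pair_cvg : (fun a' : R => (a', x)) @ a --> (a, x).
  exact: (cvg_pair cvg_id (cvg_cst x)).
exact: (continuous_comp pair_cvg (Fcont (a, x))).
Qed.
End ContinuityAndRationals.

Section SheetQuadrangle.
Variable R : realType.

Lemma start_time_mono (a b : R) k : 0 < a -> a <= b ->
  start_time a k <= start_time b k.
Proof.
move=> a0 ab; rewrite /start_time lerN2; apply: ler_wsqrtr.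
by apply: ler_wpM2l => //; rewrite lef_pV2 ?posrE; lra.
Qed.

Lemma start_time_le (y x : R) k : 0 < y -> 2 * y * x ^+ 2 <= k%:R ->
  start_time y k <= x.
Proof.
move=> y0 large; rewrite /start_time.
have : x ^+ 2 <= k%:R / (2 * y) by rewrite ler_pdivlMr; lra.
move=> /ler_wsqrtr; rewrite sqrtr_sqr => absx.
have := ler_norm (- x); rewrite normrN; lra.
Qed.

(* For k large both increments are differences of last passage values from
   (a)_k and (b)_k, and start_time a k <= start_time b k <= x <= z. *)
Lemma rational_quadrangle (L : nat -> R -> R) (S : R -> R -> R) :
  (forall i, continuous (L i)) ->
  (forall x y z : rat, 0 < y -> exists K : nat, forall k : nat, (K <= k)%N ->
      S (ratr y) (ratr z) - S (ratr y) (ratr x) =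
      lpp L (start_time (ratr y) k) k (ratr z) 1
      - lpp L (start_time (ratr y) k) k (ratr x) 1) ->
  forall qa qb qx qz : rat, 0 < qa -> qa <= qb -> qx <= qz ->
  S (ratr qa) (ratr qz) - S (ratr qa) (ratr qx) <=
  S (ratr qb) (ratr qz) - S (ratr qb) (ratr qx).
Proof.
move=> Lcont coupling qa qb qx qz qa0 qab qxz.
have [Ka incr_a] := coupling qx qa qz qa0.
have [Kb incr_b] := coupling qx qb qz (lt_le_trans qa0 qab).
set N := (Num.truncn (2 * ratr qb * (ratr qx : R) ^+ 2)).+1.
set k := maxn (maxn Ka Kb) (maxn N 1).
rewrite (incr_a k) ?(incr_b k); try (rewrite /k; lia).
have a0 : 0 < (ratr qa : R) by rewrite ltr0q.
have ab : (ratr qa : R) <= ratr qb by rewrite ler_rat.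
have xz : (ratr qx : R) <= ratr qz by rewrite ler_rat.
have AB := @start_time_mono _ _ k a0 ab.
have Bx : start_time (ratr qb : R) k <= ratr qx.
  apply: start_time_le; first exact: lt_le_trans ab.
  apply: le_trans (ltW (truncnS_gt _)) _; rewrite ler_nat -/N /k; lia.
have := @lpp_quadrangle R L Lcont _ _ _ _ 1 k ltac:(rewrite /k; lia) AB Bx xz.
lra.
Qed.

Lemma quadrangle_from_rationals (S : R -> R -> R) :
  continuous (fun p : R * R => S p.1 p.2) ->
  (forall qa qb qx qz : rat, 0 < qa -> qa <= qb -> qx <= qz ->
    S (ratr qa) (ratr qz) - S (ratr qa) (ratr qx) <=
    S (ratr qb) (ratr qz) - S (ratr qb) (ratr qx)) ->
  forall x z, x <= z ->
  {in `]0, +oo[ &, {homo (fun a => S a z - S a x) : a b / a <= b}}.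
Proof.
move=> Scont Srat x z xz.
have rat_times (qa qb : rat) : 0 < qa -> qa <= qb ->
    S (ratr qa) z - S (ratr qa) x <= S (ratr qb) z - S (ratr qb) x.
  move=> qa0 qab.
  have incr_mono : {homo (fun t => S (ratr qb) t - S (ratr qa) t) : u v / u <= v}.
    apply: homo_from_all_rationals => [|qx qz qxz].
      by move=> t; apply: cvgB; apply: continuous_slice_r.
    by have := Srat qa qb qx qz qa0 qab qxz; lra.
  by have := incr_mono x z xz; lra.
apply: homo_from_rationals => [|qa qb].
  by move=> a; apply: cvgB; apply: continuous_slice_l.
by rewrite ltr0q; exact: rat_times.
Qed.
End SheetQuadrangle.

Section LawTransfer.
Context (R : realType) (d : measure_display) (Omega : measurableType d)
  (Pr : probability Omega R).
Implicit Types (F G : Omega -> R -> R -> R) (l : seq (R * R * R)).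

Lemma ae_countable (T : countType) (P : T -> Omega -> Prop) :
  (forall t, \forall w \ae Pr, P t w) -> \forall w \ae Pr, forall t, P t w.
Proof.
move=> ae_each.
have := @ae_foralln _ _ R Pr (fun n w => forall t, unpickle n = Some t -> P t w).
case=> [n|N [mN N0 Nbad]].
  case: (unpickle n) => [t|]; last by apply: nearW.
  by apply: filterS (ae_each t) => w Ptw _ [<-].
exists N; split => // w notall; apply: Nbad => all_n; apply: notall => t.
by apply: (all_n (pickle t)); rewrite pickleK.
Qed.

Definition below F l : set Omega :=
  [set w | forall p, p \in l -> F w p.1.1 p.1.2 <= p.2].

Lemma below_cat F l1 l2 : below F (l1 ++ l2) = below F l1 `&` below F l2.
Proof.
apply/seteqP; split => w /=.
  by move=> all12; split => p lp; apply: all12; rewrite mem_cat lp ?orbT.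
by move=> [all1 all2] p; rewrite mem_cat => /orP[/all1|/all2].
Qed.

Lemma below_measurable F : (forall x y, measurable_fun setT (fun w => F w x y)) ->
  forall l, measurable (below F l).
Proof.
move=> Fmeas; elim=> [|p l IH].
  by rewrite (_ : below F [::] = setT) //; apply/seteqP; split => w.
rewrite (_ : below F (p :: l) = below F [:: p] `&` below F l); last first.
  by rewrite -below_cat.
apply: measurableI => //.
rewrite (_ : below F [:: p] = (fun w => F w p.1.1 p.1.2) @^-1` `]-oo, p.2]).
  by rewrite -[X in measurable X]setTI; exact: Fmeas.
apply/seteqP; split => w /=; rewrite in_itv /=.
  by apply; rewrite mem_head.
by move=> Fwp q; rewrite inE => /eqP ->.
Qed.

Lemma prob_diff_union (A B C : set Omega) :
  measurable A -> measurable B -> measurable C ->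
  Pr (A `\` (B `|` C)) =
  (Pr A - (Pr (A `&` B) + Pr (A `&` C) - Pr (A `&` B `&` C)))%E.
Proof.
move=> mA mB mC.
have finite (X : set Omega) : measurable X -> (Pr X < +oo)%E.
  by move=> mX; have /fin_numPlt/andP[] := fin_num_measure Pr _ mX.
have mBC : measurable (B `|` C) by exact: measurableU.
rewrite measureD //; last exact: finite.
have mAB : measurable (A `&` B) by exact: measurableI.
have mAC : measurable (A `&` C) by exact: measurableI.
congr (_ - _)%E; rewrite setIUr.
have -> : A `&` B `&` C = (A `&` B) `&` (A `&` C) by rewrite -setIIr setIA.
exact: measureUfinl (finite _ mAB).
Qed.

(* The event {F(p1) <= a, F(p4) <= e, F(p2) > b, F(p3) > c}; when
   a + e < b + c it witnesses F(p1) + F(p4) < F(p2) + F(p3). *)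
Definition gap_event F (p1 p2 p3 p4 : R * R) (a b c e : R) : set Omega :=
  below F [:: (p1, a); (p4, e)] `\` (below F [:: (p2, b)] `|` below F [:: (p3, c)]).

Lemma gap_event_measurable F {p1 p2 p3 p4 : R * R} {a b c e : R} :
  (forall x y, measurable_fun setT (fun w => F w x y)) ->
  measurable (gap_event F p1 p2 p3 p4 a b c e).
Proof.
by move=> Fmeas; apply: measurableD; [|apply: measurableU]; exact: below_measurable.
Qed.

(* By inclusion-exclusion the probability of a gap event only depends on the
   joint distribution functions of the process. *)
Lemma gap_event_prob F G :
  (forall x y, measurable_fun setT (fun w => F w x y)) ->
  (forall x y, measurable_fun setT (fun w => G w x y)) ->
  (forall l, Pr (below F l) = Pr (below G l)) ->
  forall (p1 p2 p3 p4 : R * R) a b c e, Pr (gap_event F p1 p2 p3 p4 a b c e) = Pr (gap_event G p1 p2 p3 p4 a b c e).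
Proof.
move=> Fmeas Gmeas law p1 p2 p3 p4 a b c e.
rewrite !prob_diff_union; try exact: below_measurable.
by rewrite -!below_cat !law.
Qed.

Lemma gap_event_violation {F} {p1 p2 p3 p4 : R * R} {a b c e : R} {w} :
  a + e < b + c ->
  gap_event F p1 p2 p3 p4 a b c e w ->
  F w p1.1 p1.2 + F w p4.1 p4.2 < F w p2.1 p2.2 + F w p3.1 p3.2.
Proof.
move=> sep [small not_small].
have F1 : F w p1.1 p1.2 <= a by apply: (small (p1, a)); rewrite mem_head.
have F4 : F w p4.1 p4.2 <= e by apply: (small (p4, e)); rewrite !inE eqxx orbT.
have F2 : b < F w p2.1 p2.2.
  by rewrite ltNge; apply/negP => F2b; apply: not_small; left => q /[!inE] /eqP ->.
have F3 : c < F w p3.1 p3.2.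
  by rewrite ltNge; apply/negP => F3c; apply: not_small; right => q /[!inE] /eqP ->.
lra.
Qed.

Lemma violation_gap_event F (p1 p2 p3 p4 : R * R) w :
  F w p1.1 p1.2 + F w p4.1 p4.2 < F w p2.1 p2.2 + F w p3.1 p3.2 ->
  exists a b c e : rat, ratr a + ratr e < ratr b + ratr c :> R /\
    gap_event F p1 p2 p3 p4 (ratr a) (ratr b) (ratr c) (ratr e) w.
Proof.
set v1 := F w p1.1 p1.2; set v2 := F w p2.1 p2.2.
set v3 := F w p3.1 p3.2; set v4 := F w p4.1 p4.2 => viol.
pose g := (v2 + v3 - (v1 + v4)) / 4.
have near_above (v : R) : exists q : rat, v < ratr q < v + g.
  have [q] : exists q : rat, ratr q \in `]v, v + g[.
    by apply: rat_in_itvoo; rewrite ltrDl /g; lra.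
  by rewrite in_itv /=; exists q.
have [a /andP[a1 a2]] := near_above v1; have [e /andP[e1 e2]] := near_above v4.
have [b' /andP[b1 b2]] := near_above (- v2); have [c' /andP[c1 c2]] := near_above (- v3).
exists a, (- b'), (- c'), e; rewrite !rmorphN; split; first by rewrite /g in a2 b2 c2 e2; lra.
split.
  by move=> q /[!inE] /orP[/eqP->|/eqP->] /=; [rewrite -/v1 | rewrite -/v4]; lra.
by move=> [] /(_ (_, _) (mem_head _ _)) /=; [rewrite -/v2 | rewrite -/v3]; lra.
Qed.

(* Transfer of an almost sure four-point inequality between two processes
   with the same joint distribution functions: each gap event with
   rational thresholds a + e < b + c is null for G, hence for F, and the
   countably many of them exhaust the violations of the inequality. *)
Lemma ae_quadruple_transfer F G (p1 p2 p3 p4 : R * R) :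
  (forall x y, measurable_fun setT (fun w => F w x y)) ->
  (forall x y, measurable_fun setT (fun w => G w x y)) ->
  (forall l, Pr (below G l) = Pr (below F l)) ->
  (\forall w \ae Pr, G w p2.1 p2.2 + G w p3.1 p3.2 <= G w p1.1 p1.2 + G w p4.1 p4.2) ->
  \forall w \ae Pr, F w p2.1 p2.2 + F w p3.1 p3.2 <= F w p1.1 p1.2 + F w p4.1 p4.2.
Proof.
move=> Fmeas Gmeas law [N [mN N0 Nbad]].
have no_gap : \forall w \ae Pr, forall a b c e : rat,
    ratr a + ratr e < ratr b + ratr c :> R ->
    ~ gap_event F p1 p2 p3 p4 (ratr a) (ratr b) (ratr c) (ratr e) w.
  apply: ae_countable => a; apply: ae_countable => b.
  apply: ae_countable => c; apply: ae_countable => e.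
  have [sep|nsep] := pselect (ratr a + ratr e < ratr b + ratr c :> R); last first.
    by apply: nearW => w /nsep.
  exists (gap_event F p1 p2 p3 p4 (ratr a) (ratr b) (ratr c) (ratr e)).
  split; first exact: gap_event_measurable.
    rewrite -(@gap_event_prob G F Gmeas Fmeas law).
    have mgap : measurable (gap_event G p1 p2 p3 p4 (ratr a) (ratr b) (ratr c) (ratr e)).
      exact: gap_event_measurable.
    apply: (subset_measure0 mgap mN) => // w.
    by move=> /(gap_event_violation sep) viol; apply: Nbad => /=; rewrite leNgt viol.
  by move=> w /= unsound; apply: contra_notP unsound => no_gap _.
apply: filterS no_gap => w sound; rewrite leNgt; apply/negP => /violation_gap_event.
by move=> [a [b [c [e [sep gap]]]]]; exact: sound sep gap.
Qed.
End LawTransfer.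

Section SheetMonotonicity.
Context (R : realType) (d : measure_display) (Omega : measurableType d)
  (Pr : probability Omega R) (S : Omega -> R -> R -> R).
Hypothesis sheet : is_parabolic_Airy_sheet Pr S.

Lemma sheet_quadrangle_pos : \forall w \ae Pr, forall x z, x <= z ->
  {in `]0, +oo[ &, {homo (fun a => S w a z - S w a x) : a b / a <= b}}.
Proof.
have [_ [Scont [_ [L [[_ [Lcont _]] _ coupling]]]]] := sheet.
apply: filterS coupling => w coupling_w.
apply: quadrangle_from_rationals; first exact: Scont.
exact: (@rational_quadrangle _ (L w) _ (Lcont w) coupling_w).
Qed.

(* For arbitrary times ya <= yb and fixed points x <= z the quadrangle
   inequality still holds almost surely: it holds for the shifted sheet
   S(. + z0, . + z0) with ya + z0 > 0, which has the same law. *)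
Lemma sheet_quadrangle (ya yb x z : R) : ya <= yb -> x <= z ->
  \forall w \ae Pr, S w yb x + S w ya z <= S w yb z + S w ya x.
Proof.
have [Smeas [_ [Slaw _]]] := sheet; move=> yab xz.
pose z0 := `|ya| + 1.
have ya_shift : 0 < ya + z0 by rewrite /z0; have := ler_norm (- ya); rewrite normrN; lra.
have := @ae_quadruple_transfer R d Omega Pr S (fun w x y => S w (x + z0) (y + z0))
  (yb, z) (yb, x) (ya, z) (ya, x) Smeas (fun x y => Smeas (x + z0) (y + z0)) (Slaw z0).
apply; apply: filterS sheet_quadrangle_pos => w /= quad_w.
have := quad_w (x + z0) (z + z0); rewrite lerD2r => /(_ xz (ya + z0) (yb + z0)).
by rewrite !in_itv /= !andbT => /(_ ya_shift ltac:(lra) ltac:(lra)); lra.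
Qed.
End SheetMonotonicity.

Theorem lemma1p1 (R : realType) (d : measure_display) (Omega : measurableType d)
    (Pr : probability Omega R) (S : Omega -> R -> R -> R) (ya yb : R) :
  is_parabolic_Airy_sheet Pr S -> ya < yb ->
  \forall w \ae Pr,
    continuous (fun x => S w yb x - S w ya x) /\
    {homo (fun x => S w yb x - S w ya x) : x y / x <= y}.
Proof.
move=> sheet yab; have [_ [Scont _]] := sheet.
have quad_rat : \forall w \ae Pr, forall qx qz : rat, qx <= qz ->
    S w yb (ratr qx) + S w ya (ratr qz) <= S w yb (ratr qz) + S w ya (ratr qx).
  apply: ae_countable => qx; apply: ae_countable => qz.
  have [qxz|_] := boolP (qx <= qz); last by apply: nearW.
  have xz : (ratr qx : R) <= ratr qz by rewrite ler_rat.
  have := @sheet_quadrangle R d Omega Pr S sheet ya yb _ _ (ltW yab) xz.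
  by apply: filterS => w ineq _.
apply: filterS quad_rat => w quad_w.
have Dcont : continuous (fun x => S w yb x - S w ya x).
  by move=> x; apply: cvgB; apply: continuous_slice_r.
split => //; apply: homo_from_all_rationals => // qx qz qxz.
by have := quad_w qx qz qxz; lra.
Qed.
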